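(* Let $R_e\approx1.4877$ be the unique positive root of $\frac{10}{7(R+1)}-\frac{R^2\sqrt{R}}{R^2+R+1}=0$, and let $\tau_k>0$ be time steps with ratios $r_k=\tau_k/\tau_{k-1}\in(0,R_e)$ for all $k\ge2$. Then for every $n\ge3$ and every nonzero vector $(\xi_3,\dots,\xi_n)$ of reals, $$2\sum_{k=3}^n\xi_k\sum_{j=3}^k\tau_k\vartheta^{(k)}_{k-j}\xi_j>0 .$$
   Context: For $x,y\ge0$: $d_0(x,y)=\frac{1+2x}{1+x}+\frac{xy}{1+y+xy}$, $d_1(x,y)=-\frac{x}{1+x}-\frac{xy}{1+y+xy}-\frac{xy^2}{1+y+xy}\frac{1+x}{1+y}$, $d_2(x,y)=\frac{xy^2}{1+y+xy}\frac{1+x}{1+y}$. BDF3 kernels: $d^{(n)}_j=d_j(r_n,r_{n-1})$ for $j=0,1,2$, $d^{(n)}_j=0$ for $j\ge3$. The discrete orthogonal convolution (DOC) kernels are defined recursively for each fixed $n\ge3$ by $\vartheta^{(n)}_0=1/d^{(n)}_0$ and $\vartheta^{(n)}_{n-j}=-\frac{1}{d^{(j)}_0}\sum_{i=j+1}^n\vartheta^{(n)}_{n-i}d^{(i)}_{i-j}$ for $3\le j\le n-1$. *)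

From HB Require Import structures.
From mathcomp Require Import all_boot all_order all_algebra.
From mathcomp Require Import reals.
Set Implicit Arguments. Unset Strict Implicit. Unset Printing Implicit Defensive.
Import Order.TTheory GRing.Theory Num.Theory.
Local Open Scope ring_scope.

Section BDF3.
Variable R : realType.

Definition Re_eq (x : R) : R :=
  10 / (7 * (x + 1)) - x ^+ 2 * Num.sqrt x / (x ^+ 2 + x + 1).

Definition d0 (x y : R) : R := (1 + 2 * x) / (1 + x) + x * y / (1 + y + x * y).
Definition d1 (x y : R) : R :=
  - (x / (1 + x)) - x * y / (1 + y + x * y)
  - x * y ^+ 2 / (1 + y + x * y) * ((1 + x) / (1 + y)).
Definition d2 (x y : R) : R := x * y ^+ 2 / (1 + y + x * y) * ((1 + x) / (1 + y)).

Variable tau : nat -> R.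

Definition stepratio (k : nat) : R := tau k / tau k.-1.

Definition dker (n j : nat) : R :=
  match j with
  | 0 => d0 (stepratio n) (stepratio n.-1)
  | 1 => d1 (stepratio n) (stepratio n.-1)
  | 2 => d2 (stepratio n) (stepratio n.-1)
  | _ => 0
  end.

(* thseq n m = [:: theta^{(n)}_0; ...; theta^{(n)}_m], built by the recursion
   theta^{(n)}_0 = 1/d^{(n)}_0,
   theta^{(n)}_{n-j} = -1/d^{(j)}_0 * sum_{i=j+1}^n theta^{(n)}_{n-i} d^{(i)}_{i-j}. *)
Fixpoint thseq (n m : nat) : seq R :=
  match m with
  | 0 => [:: 1 / dker n 0]
  | m'.+1 =>
      let s := thseq n m' in
      let j := (n - m)%N in
      rcons s (- (1 / dker j 0) *
               \sum_(j.+1 <= i < n.+1) nth 0 s (n - i) * dker i (i - j))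
  end.

(* DOC kernel theta^{(n)}_m (meaningful for 0 <= m <= n-3) *)
Definition theta (n m : nat) : R := nth 0 (thseq n m) m.

End BDF3.

(* Put eta_k = sum_(j=3..k) theta^(k)_(k-j) xi_j.  The DOC kernels invert the
   BDF3 kernels, so xi_k = d0 eta_k + d1 eta_(k-1) + d2 eta_(k-2) with eta_1 = eta_2 = 0,
   and the quadratic form is sum_k xi_k tau_k eta_k.  For the energy
   E_k = tau_k (4 eta_k^2 - 3 eta_k eta_(k-1) + eta_(k-1)^2) / 5, using
   tau_(k-1) = tau_k / r_k and completing squares gives, whenever r_k and r_(k-1)
   lie in (0, 3/2),
     tau_k eta_k xi_k >= tau_k eta_k^2 / 10 + E_k - E_(k-1);
   the coefficient left over is a rational function of (r_k, r_(k-1)) whose numerator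
   has a nonnegative Bernstein expansion on [0, 3/2]^2.  Summing, the energies
   telescope, so the form is at least sum_k tau_k eta_k^2 / 10, which is positive
   since eta is nonzero when xi is.  Finally R_e < 3/2, because Re_eq < 0 on [3/2, oo). *)

From mathcomp Require Import all_boot all_order all_algebra.
From mathcomp Require Import reals.
From mathcomp Require Import ring lra zify.
Set Implicit Arguments. Unset Strict Implicit. Unset Printing Implicit Defensive.
Import Order.TTheory GRing.Theory Num.Theory.
Local Open Scope ring_scope.

Section DefectPolynomial.
Variable R : realFieldType.
Implicit Types x y : R.

Definition defect_poly x y : R :=
  14 + 56 * y + 84 * y ^+ 2 + 56 * y ^+ 3 + 14 * y ^+ 4
  + 124 * x + 664 * x * y + 1248 * x * y ^+ 2 + 1000 * x * y ^+ 3 + 292 * x * y ^+ 4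
  + 106 * x ^+ 2 + 992 * x ^+ 2 * y + 2434 * x ^+ 2 * y ^+ 2 + 2316 * x ^+ 2 * y ^+ 3
  + 768 * x ^+ 2 * y ^+ 4
  - 104 * x ^+ 3 - 184 * x ^+ 3 * y + 336 * x ^+ 3 * y ^+ 2 + 848 * x ^+ 3 * y ^+ 3
  + 232 * x ^+ 3 * y ^+ 4
  - 368 * x ^+ 4 * y - 1158 * x ^+ 4 * y ^+ 2 - 992 * x ^+ 4 * y ^+ 3 - 902 * x ^+ 4 * y ^+ 4
  - 324 * x ^+ 5 * y ^+ 2 - 328 * x ^+ 5 * y ^+ 3 - 804 * x ^+ 5 * y ^+ 4
  + 140 * x ^+ 6 * y ^+ 3 - 60 * x ^+ 6 * y ^+ 4 + 200 * x ^+ 7 * y ^+ 4 + 100 * x ^+ 8 * y ^+ 4.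

Definition bern84 x y (i j : nat) : R :=
  x ^+ i * (3 - 2 * x) ^+ (8 - i) * (y ^+ j * (3 - 2 * y) ^+ (4 - j)).

Lemma bern84_ge0 x y i j :
  0 <= x <= 3/2 -> 0 <= y <= 3/2 -> 0 <= bern84 x y i j.
Proof.
move=> /andP[x0 x1] /andP[y0 y1].
have x_le : 0 <= 3 - 2 * x by lra.
have y_le : 0 <= 3 - 2 * y by lra.
by rewrite !mulr_ge0 ?exprn_ge0.
Qed.

(* Numerals are written [n%:R]: a bare numeral in [ring_scope] is unfolded to a
   unary [nat], which overflows for the large coefficients. *)
Lemma defect_poly_bernstein x y :
  (3 ^+ 12) * defect_poly x y =
    14%:R * bern84 x y 0 0 + 280%:R * bern84 x y 0 1 + 2100%:R * bern84 x y 0 2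
      + 7000%:R * bern84 x y 0 3 + 8750%:R * bern84 x y 0 4
  + 596%:R * bern84 x y 1 0 + 13432%:R * bern84 x y 1 1 + 112080%:R * bern84 x y 1 2
      + 411400%:R * bern84 x y 1 3 + 561500%:R * bern84 x y 1 4
  + 7730%:R * bern84 x y 2 0 + 191104%:R * bern84 x y 2 1 + 1714674%:R * bern84 x y 2 2
      + 6678940%:R * bern84 x y 2 3 + 9584600%:R * bern84 x y 2 4
  + 46160%:R * bern84 x y 3 0 + 1253032%:R * bern84 x y 3 1 + 12027000%:R * bern84 x y 3 2
      + 49401760%:R * bern84 x y 3 3 + 73675400%:R * bern84 x y 3 4
  + 149000%:R * bern84 x y 4 0 + 4422016%:R * bern84 x y 4 1 + 45039234%:R * bern84 x y 4 2
      + 194013880%:R * bern84 x y 4 3 + 294748850%:R * bern84 x y 4 4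
  + 273728%:R * bern84 x y 5 0 + 8811328%:R * bern84 x y 5 1 + 93871524%:R * bern84 x y 5 2
      + 421844680%:R * bern84 x y 5 3 + 622787300%:R * bern84 x y 5 4
  + 279392%:R * bern84 x y 6 0 + 9641728%:R * bern84 x y 6 1 + 104480328%:R * bern84 x y 6 2
      + 490602580%:R * bern84 x y 6 3 + 620095700%:R * bern84 x y 6 4
  + 139520%:R * bern84 x y 7 0 + 5054080%:R * bern84 x y 7 1 + 51714480%:R * bern84 x y 7 2
      + 261794800%:R * bern84 x y 7 3 + 177947000%:R * bern84 x y 7 4
  + 22400%:R * bern84 x y 8 0 + 793600%:R * bern84 x y 8 1 + 4785600%:R * bern84 x y 8 2
      + 35986000%:R * bern84 x y 8 3 + 8802500%:R * bern84 x y 8 4.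
Proof. by rewrite /defect_poly /bern84; ring. Qed.

Lemma defect_poly_ge0 x y : 0 <= x <= 3/2 -> 0 <= y <= 3/2 -> 0 <= defect_poly x y.
Proof.
move=> hx hy.
have pos3 : 0 < 3 ^+ 12 :> R by rewrite exprn_gt0.
rewrite -(pmulr_rge0 _ pos3) defect_poly_bernstein.
by do ![apply: addr_ge0 | apply: mulr_ge0; [exact: ler0n | exact: bern84_ge0]].
Qed.

End DefectPolynomial.

Section LocalEnergy.
Variable R : realType.
Implicit Types x y p q s : R.

Definition energy_form p q : R := 4 * p ^+ 2 - 3 * p * q + q ^+ 2.

Lemma energy_form_ge0 p q : 0 <= energy_form p q.
Proof.
have := sqr_ge0 (q - 3/2 * p); have := sqr_ge0 p.
by rewrite /energy_form => ? ?; nra.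
Qed.

Definition schur_coef x y : R :=
  d0 x y - 4/5 - 5 * x * d2 x y ^+ 2 / 4
  - 5 * x * (d1 x y + 3/5 + 3 * d2 x y / 2) ^+ 2 / (7 - 4 * x).

Lemma schur_coefE x y : 0 < x < 3/2 -> 0 < y ->
  schur_coef x y - 1/10 =
  defect_poly x y / (20 * ((1 + x) * (1 + y + x * y) * (1 + y)) ^+ 2 * (7 - 4 * x)).
Proof.
move=> /andP[x0 x1] y0.
have nz1 : 1 + x != 0 by apply/eqP; lra.
have nz2 : 1 + y + x * y != 0 by apply/eqP; nra.
have nz3 : 1 + y != 0 by apply/eqP; lra.
have nz4 : 7 - 4 * x != 0 by apply/eqP; lra.
rewrite /schur_coef /d0 /d1 /d2 /defect_poly.
by field; rewrite nz1 nz2 nz3 nz4.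
Qed.

Lemma schur_coef_ge x y : 0 < x < 3/2 -> 0 < y < 3/2 -> 1/10 <= schur_coef x y.
Proof.
move=> /[dup] hx /andP[x0 x1] /[dup] hy /andP[y0 y1].
rewrite -subr_ge0 schur_coefE // divr_ge0 //.
  by apply: defect_poly_ge0; apply/andP; split; lra.
apply: mulr_ge0; last lra.
by rewrite mulr_ge0 ?sqr_ge0.
Qed.

(* Complete the square in [s], then in [q]: what remains is
   [(schur_coef x y - 1/10) * p ^+ 2]. *)
Lemma local_energy_ineq x y p q s : 0 < x < 3/2 -> 0 < y < 3/2 ->
  p ^+ 2 / 10 + energy_form p q / 5
  <= p * (d0 x y * p + d1 x y * q + d2 x y * s) + energy_form q s / (5 * x).
Proof.
move=> hx hy; have := schur_coef_ge hx hy; case/andP: hx => x0 x1.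
rewrite /schur_coef /energy_form.
move: (d0 x y) (d1 x y) (d2 x y) => a b c.
set C := 7/20 - x/5; set B := b + 3/5 + 3 * c / 2.
set K := a - _ - _ - _ => K_ge.
have sq_form : p * (a * p + b * q + c * s) + (4 * q ^+ 2 - 3 * q * s + s ^+ 2) / (5 * x)
    - (p ^+ 2 / 10 + (4 * p ^+ 2 - 3 * p * q + q ^+ 2) / 5)
  = ((s + 5 * (x * c * p - 3 * q / 5) / 2) ^+ 2 / 5 + C * (q + x * B * p / (2 * C)) ^+ 2) / x
    + (K - 1/10) * p ^+ 2.
  rewrite /K /B /C; field.
  by apply/and3P; split; apply/eqP; lra.
have C_gt0 : 0 < C by rewrite /C; lra.
rewrite -subr_ge0 sq_form addr_ge0 //; last by rewrite mulr_ge0 ?sqr_ge0 ?subr_ge0.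
apply: divr_ge0 (ltW x0); apply: addr_ge0.
  exact: divr_ge0 (sqr_ge0 _) (ler0n _ 5).
exact: mulr_ge0 (ltW C_gt0) (sqr_ge0 _).
Qed.

Lemma d0_gt0 x y : 0 < x -> 0 < y -> 0 < d0 x y.
Proof. by move=> x0 y0; rewrite /d0 addr_gt0 // divr_gt0 //; nra. Qed.

Lemma Re_eq_lt0 x : 3/2 <= x -> Re_eq x < 0.
Proof.
move=> x_ge; have x_gt0 : 0 < x by lra.
have s_ge0 := sqrtr_ge0 x; have s_sq := sqr_sqrtr (ltW x_gt0).
move: s_ge0 s_sq; set s := Num.sqrt x => s_ge0 s_sq.
have s_ge : 61/50 <= s by nra.
have nz1 : x + 1 != 0 by apply/eqP; lra.
have nz2 : x ^+ 2 + x + 1 != 0 by apply/eqP; nra.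
have -> : Re_eq x = (10 * (x ^+ 2 + x + 1) - 7 * (x + 1) * x ^+ 2 * s)
                    / (7 * (x + 1) * (x ^+ 2 + x + 1)).
  by rewrite /Re_eq -/s; field; rewrite nz1 nz2.
rewrite pmulr_llt0 ?invr_gt0; last by rewrite !mulr_gt0 //; nra.
(* In [x - 3/2], [7 (x + 1) x^2 (61/50) - 10 (x^2 + x + 1)] is a cubic with
   positive coefficients. *)
have t1 : 0 <= (x - 3/2) ^+ 2 := sqr_ge0 _.
have t2 : 0 <= (x - 3/2) ^+ 3 by rewrite exprn_ge0 // subr_ge0.
have t3 : 0 <= x ^+ 2 * (x + 1) * (s - 61/50) by rewrite !mulr_ge0 ?sqr_ge0 //; lra.
nra.
Qed.

End LocalEnergy.

Lemma big_nat_mulmx1C (R : comPzRingType) (m n : nat) (A B : nat -> nat -> R) :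
  (forall k j, (m <= k < n)%N -> (m <= j < n)%N ->
     \sum_(m <= i < n) A k i * B i j = (k == j)%:R) ->
  forall k j, (m <= k < n)%N -> (m <= j < n)%N ->
     \sum_(m <= i < n) B k i * A i j = (k == j)%:R.
Proof.
move=> AB k j /andP[mk kn] /andP[mj jn].
have shift (F : nat -> R) : \sum_(i < n - m) F (i + m)%N = \sum_(m <= i < n) F i.
  by symmetry; rewrite -{1}[m]add0n big_addn big_mkord.
pose toM (F : nat -> nat -> R) : 'M[R]_(n - m) := \matrix_(a, b) F (a + m)%N (b + m)%N.
have /mulmx1C BA : toM A *m toM B = 1%:M.
  apply/matrixP => a b; rewrite !mxE.
  under eq_bigr do rewrite !mxE.
  have ha := ltn_ord a; have hb := ltn_ord b.
  by rewrite (shift (fun i => A (a + m)%N i * B i (b + m)%N)) AB ?eqn_add2r //; lia.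
have km : (k - m < n - m)%N by lia.
have jm : (j - m < n - m)%N by lia.
move/matrixP/(_ (Ordinal km) (Ordinal jm)): BA; rewrite !mxE /=.
under eq_bigr do rewrite !mxE.
rewrite (shift (fun i => B (k - m + m)%N i * A i (j - m + m)%N)) !subnK // => ->.
by rewrite -val_eqE /= -(eqn_add2r m) !subnK.
Qed.

Definition lowtri (R : pzSemiRingType) (a : nat -> nat -> R) (k i : nat) : R :=
  if (i <= k)%N then a k (k - i)%N else 0.

Lemma big_lowtri_mul (R : pzSemiRingType) (a b : nat -> nat -> R) m n k j :
  (m <= j)%N -> (k < n)%N ->
  \sum_(m <= i < n) lowtri a k i * lowtri b i j
  = \sum_(j <= i < k.+1) a k (k - i)%N * b i (i - j)%N.
Proof.
move=> mj kn.
rewrite (big_nat_widen _ _ _ _ _ kn) (big_nat_widenl _ _ _ _ _ mj) [RHS]big_mkcond.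
apply: eq_bigr => i _; rewrite /lowtri ltnS.
by case: (leqP i k); case: (leqP j i); rewrite ?mul0r ?mulr0.
Qed.

Section DOCKernels.
Variables (R : realType) (tau : nat -> R).

Lemma size_thseq k m : size (thseq tau k m) = m.+1.
Proof. by elim: m => [|m IH] //=; rewrite size_rcons IH. Qed.

Lemma nth_thseq k m i : (i <= m)%N -> nth 0 (thseq tau k m) i = theta tau k i.
Proof.
elim: m => [|m IH]; first by rewrite leqn0 => /eqP ->.
rewrite leq_eqVlt => /orP[/eqP -> //|im].
by rewrite /= nth_rcons size_thseq im IH.
Qed.

Lemma theta_dker_delta k j : (j <= k)%N -> dker tau j 0 != 0 ->
  \sum_(j <= i < k.+1) theta tau k (k - i) * dker tau i (i - j) = (k == j)%:R.
Proof.
move=> jk dj.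
have [->|kj] := eqVneq k j; first by rewrite big_nat1 subnn /theta /= mul1r mulVf.
have [m km] : exists m, (k - j = m.+1)%N by exists (k - j).-1; lia.
rewrite big_ltn // subnn.
have -> : \sum_(j.+1 <= i < k.+1) theta tau k (k - i) * dker tau i (i - j)
        = \sum_(j.+1 <= i < k.+1) nth 0 (thseq tau k m) (k - i) * dker tau i (i - j).
  by apply: eq_big_nat => i /andP[ji ik]; rewrite nth_thseq //; lia.
rewrite km /theta /= nth_rcons size_thseq ltnn eqxx.
have -> : (k - m.+1 = j)%N by lia.
by move: dj; rewrite /dker => dj; field.
Qed.

(* The DOC recursion says Theta D = I for the lower-triangular kernel matrices
   indexed by 3..k; being square, they also satisfy D Theta = I. *)
Lemma dker_theta_delta k j : (3 <= j <= k)%N ->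
    (forall i, (3 <= i <= k)%N -> dker tau i 0 != 0) ->
  \sum_(j <= i < k.+1) dker tau k (k - i) * theta tau i (i - j) = (k == j)%:R.
Proof.
move=> /andP[j3 jk] d0_neq0.
rewrite -(big_lowtri_mul _ _ j3 (ltnSn k)).
apply: (big_nat_mulmx1C (A := lowtri (theta tau))); last by rewrite j3 ltnS.
  move=> k' j' /andP[k'3 k'k] /andP[j'3 j'k]; rewrite big_lowtri_mul //.
  have [j'k'|k'j'] := leqP j' k'; last by rewrite big_geq // ltn_eqF.
  by rewrite theta_dker_delta // d0_neq0 // j'3; lia.
by rewrite (leq_trans j3 jk) ltnSn.
Qed.

Definition doc_conv (xi : nat -> R) (k : nat) : R :=
  \sum_(3 <= j < k.+1) theta tau k (k - j) * xi j.

Lemma dker_doc_conv xi k : (3 <= k)%N ->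
    (forall i, (3 <= i <= k)%N -> dker tau i 0 != 0) ->
  \sum_(3 <= i < k.+1) dker tau k (k - i) * doc_conv xi i = xi k.
Proof.
move=> k3 d0_neq0.
transitivity (\sum_(3 <= i < k.+1) \sum_(3 <= j < k.+1)
                lowtri (dker tau) k i * lowtri (theta tau) i j * xi j).
  apply: eq_big_nat => i /andP[i3 ik]; rewrite /doc_conv mulr_sumr.
  rewrite (big_nat_widen _ _ _ _ _ ik) big_mkcond.
  apply: eq_bigr => j _; rewrite /lowtri -[(i <= k)%N]ltnS ik ltnS /=.
  by case: leqP => _; rewrite ?mulrA ?mulr0 ?mul0r.
rewrite exchange_big /=.
under eq_big_nat => j /andP[j3 jk] do
  rewrite -mulr_suml big_lowtri_mul // dker_theta_delta ?j3 //.
rewrite big_nat_recr //= eqxx mul1r big_nat_cond big1 ?add0r // => j /andP[/andP[_ jk] _].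
by rewrite gtn_eqF // mul0r.
Qed.

Lemma dker_conv3 (f : nat -> R) k : (2 <= k)%N -> (forall i, (i < 3)%N -> f i = 0) ->
  \sum_(3 <= i < k.+1) dker tau k (k - i) * f i
  = dker tau k 0 * f k + dker tau k 1 * f k.-1 + dker tau k 2 * f k.-2.
Proof.
move=> k2 f0.
have low : \sum_(0 <= i < 3) dker tau k (k - i) * f i = 0.
  by rewrite big_nat_cond big1 // => i /andP[/andP[_ i3] _]; rewrite f0 ?mulr0.
rewrite -[LHS]add0r -{1}low -big_cat_nat // big_nat_rev.
rewrite (eq_big_nat _ _ (F2 := fun i => dker tau k i * f (k - i)%N)); last first.
  by move=> i /andP[_ ik]; rewrite add0n subSS subKn.
rewrite big_ltn // big_ltn; last by lia.
rewrite big_ltn // subn0 subn1 subn2.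
rewrite big_nat_cond big1 /= ?addr0 ?addrA //.
by move=> [|[|[|i]]] //= _; rewrite mul0r.
Qed.

End DOCKernels.

Lemma wsumr_sqr_gt0 (R : realDomainType) (w f : nat -> R) m n k0 :
    (forall k, (m <= k < n)%N -> 0 < w k) -> (m <= k0 < n)%N -> f k0 != 0 ->
  0 < \sum_(m <= k < n) w k * f k ^+ 2.
Proof.
move=> w_gt0 k0_in fk0.
rewrite (bigD1_seq k0) ?mem_index_iota ?iota_uniq //= ltr_pwDl //.
  by rewrite mulr_gt0 ?w_gt0 // exprn_even_gt0 // fk0 orbT.
rewrite big_seq_cond sumr_ge0 // => k /andP[+ _]; rewrite mem_index_iota => k_in.
by rewrite mulr_ge0 ?sqr_ge0 // ltW ?w_gt0.
Qed.

Section BoundedStepRatios.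
Variables (R : realType) (tau : nat -> R).
Hypothesis tau_gt0 : forall k, (2 <= k)%N -> 0 < tau k.
Hypothesis ratio_bound : forall k, (2 <= k)%N -> 0 < stepratio tau k < 3/2.

Lemma dker0_gt0 k : (3 <= k)%N -> 0 < dker tau k 0.
Proof.
move=> k3; have /andP[x0 _] := ratio_bound (ltnW k3).
have /andP[y0 _] : 0 < stepratio tau k.-1 < 3/2 by apply: ratio_bound; lia.
exact: d0_gt0.
Qed.

Lemma doc_conv_recurrence xi k : (3 <= k)%N ->
  xi k = dker tau k 0 * doc_conv tau xi k + dker tau k 1 * doc_conv tau xi k.-1
         + dker tau k 2 * doc_conv tau xi k.-2.
Proof.
move=> k3; rewrite -dker_conv3 ?(ltnW k3) ?dker_doc_conv //.
  by move=> i /andP[i3 _]; rewrite lt0r_neq0 ?dker0_gt0.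
by move=> i i3; rewrite /doc_conv big_geq.
Qed.

Lemma doc_conv_neq0 xi n : (exists k, [/\ (3 <= k)%N, (k <= n)%N & xi k != 0]) ->
  exists k, [/\ (3 <= k)%N, (k <= n)%N & doc_conv tau xi k != 0].
Proof.
case=> k [k3 kn]; rewrite -(@dker_doc_conv R tau xi k k3); last first.
  by move=> i /andP[i3 _]; rewrite lt0r_neq0 ?dker0_gt0.
move=> xik; have /hasP[i] : has (fun i => doc_conv tau xi i != 0) (index_iota 3 k.+1).
  apply: contraNT xik => /hasPn eta0.
  by rewrite big_seq big1 // => i /eta0 /negPn /eqP ->; rewrite mulr0.
by rewrite mem_index_iota => /andP[i3 ik] eta_i; exists i; split => //; lia.
Qed.

Definition discrete_energy (eta : nat -> R) (k : nat) : R :=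
  tau k * energy_form (eta k) (eta k.-1) / 5.

Lemma discrete_energy_step eta k : (3 <= k)%N ->
  tau k * eta k ^+ 2 / 10 + (discrete_energy eta k - discrete_energy eta k.-1)
  <= (dker tau k 0 * eta k + dker tau k 1 * eta k.-1 + dker tau k 2 * eta k.-2)
     * (tau k * eta k).
Proof.
move=> k3; have hx := ratio_bound (ltnW k3); have /andP[x0 _] := hx.
have hy : 0 < stepratio tau k.-1 < 3/2 by apply: ratio_bound; lia.
have tk := tau_gt0 (ltnW k3).
have tau_prev : tau k.-1 = tau k / stepratio tau k.
  by rewrite /stepratio invf_div mulrC mulfVK ?gt_eqF.
have := local_energy_ineq (eta k) (eta k.-1) (eta k.-2) hx hy.
rewrite -(ler_pM2l tk) /discrete_energy tau_prev /dker => ineq.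
by rewrite /energy_form in ineq *; lra.
Qed.

Lemma discrete_energy_estimate eta xi n : (2 <= n)%N -> eta 1 = 0 -> eta 2 = 0 ->
    (forall k, (3 <= k <= n)%N ->
       xi k = dker tau k 0 * eta k + dker tau k 1 * eta k.-1 + dker tau k 2 * eta k.-2) ->
  (\sum_(3 <= k < n.+1) tau k * eta k ^+ 2) / 10 <= \sum_(3 <= k < n.+1) xi k * (tau k * eta k).
Proof.
move=> n2 eta1 eta2 xiE.
have telescope : \sum_(3 <= k < n.+1) (discrete_energy eta k - discrete_energy eta k.-1)
               = discrete_energy eta n - discrete_energy eta 2.
  by apply: (telescope_sumr_eq (fun k => discrete_energy eta k.-1)) => //; lia.
have energy2 : discrete_energy eta 2 = 0.
  by rewrite /discrete_energy /energy_form /= eta2 eta1; ring.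
have energy_n_ge0 : 0 <= discrete_energy eta n.
  by rewrite /discrete_energy divr_ge0 ?mulr_ge0 ?energy_form_ge0 ?ltW ?tau_gt0.
apply: le_trans (ler_sum_nat _) => [|k /andP[k3 kn]]; last first.
  by rewrite xiE ?k3 //; apply: discrete_energy_step.
by rewrite mulr_suml big_split telescope energy2 subr0 lerDl.
Qed.

End BoundedStepRatios.

Theorem lemma4p1 (R : realType) (Re : R)
  (hRe_pos : 0 < Re) (hRe_root : Re_eq Re = 0)
  (hRe_uniq : forall x : R, 0 < x -> Re_eq x = 0 -> x = Re)
  (tau : nat -> R)
  (htau : forall k : nat, (1 <= k)%N -> 0 < tau k)
  (hr : forall k : nat, (2 <= k)%N -> 0 < @stepratio R tau k < Re)
  (n : nat) (hn : (3 <= n)%N) (xi : nat -> R)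
  (hxi : exists k : nat, [/\ (3 <= k)%N, (k <= n)%N & xi k != 0]) :
  0 < 2 * \sum_(3 <= k < n.+1)
            xi k * \sum_(3 <= j < k.+1) tau k * @theta R tau k (k - j) * xi j.
Proof.
have Re_lt : Re < 3/2.
  by rewrite ltNge; apply/negP => /Re_eq_lt0; rewrite hRe_root ltxx.
have ratio_bound k : (2 <= k)%N -> 0 < stepratio tau k < 3/2.
  by move=> /hr /andP[r0 rRe]; rewrite r0 (lt_trans rRe).
have tau_gt0 k : (2 <= k)%N -> 0 < tau k by move=> k2; apply/htau/ltnW.
pose eta := doc_conv tau xi.
have inner k : \sum_(3 <= j < k.+1) tau k * theta tau k (k - j) * xi j = tau k * eta k.
  by rewrite /eta /doc_conv mulr_sumr; apply: eq_bigr => j _; rewrite mulrA.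
under eq_bigr do rewrite inner.
have [k0 [k03 k0n eta_k0]] := doc_conv_neq0 ratio_bound hxi.
apply: mulr_gt0 => //.
apply: lt_le_trans (discrete_energy_estimate tau_gt0 ratio_bound (ltnW hn) _ _ _);
  [| by rewrite /eta /doc_conv big_geq .. | by move=> k /andP[k3 _]; apply: doc_conv_recurrence].
rewrite divr_gt0 // (wsumr_sqr_gt0 _ (k0 := k0)) // => [k /andP[k3 _]|].
  exact/tau_gt0/ltnW.
by rewrite k03 ltnS.
Qed.
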